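(* Let $\gamma>0$ and let $H$ be a $3$-graph of order $n$ with $\delta_2(H)\ge(1/2-\gamma)n$. Suppose $X,Y$ is a bipartition of $V(H)$. Let $x,x'\in X$ and $y_1,y_2\in Y$ be such that $xy_1y_2,\,xx'y_1,\,xx'y_2\in E(H)$. Then at least one of the following holds: (a) $\{x,x',y_1,y_2\}$ is contained in at least $\gamma n/4$ $5$-sets that span $(X,Y)$-bridges of length $1$; (b) there are at least $\gamma n/4$ copies $K$ of $K_4^3$ in $H$ with $|V(K)\cap X|=2=|V(K)\cap Y|$ and $|V(K)\cap\{x,x',y_1,y_2\}|=3$; (c) $(1/2-15\gamma/4)n\le|X|,|Y|\le(1/2+15\gamma/4)n$ and $xx'y_1$ is $(26\gamma,X,Y)$-typical.
   Context: $\delta_2(H)$ is the minimum over pairs of distinct vertices of the number of edges containing the pair. $K_4^3$ is the complete $3$-graph on $4$ vertices (copies counted as $4$-sets all of whose triples are edges); $K_4^-$ is the $3$-graph with $4$ vertices and $3$ edges. A set $S$ is an $(x,y)$-connector of length $1$ if $S\cap\{x,y\}=\emptyset$, $|S|=3$, and both $S\cup\{x\}$ and $S\cup\{y\}$ span copies of $K_4^-$ in $H$. A triple $(x_0,y_0,S)$ is an $(X,Y)$-bridge of length $1$ if $x_0\in X$, $y_0\in Y$ and $S$ is an $(x_0,y_0)$-connector of length $1$; a $5$-set $Z$ spans an $(X,Y)$-bridge of length $1$ if $Z=S\cup\{x_0,y_0\}$ for some such bridge. Write $N(uv)$ for the set of $w$ with $uvw\in E(H)$, $N(uv,Z)=N(uv)\cap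 Z$, $\deg(uv,Z)=|N(uv,Z)|$. For $\rho>0$, a triple $xx'y$ with $x,x'\in X$, $y\in Y$ is $(\rho,X,Y)$-typical if (T1) $\deg(xx',Y)\ge|Y|-\rho n$, (T2) $|N(xy,X)\cap N(x'y,X)|\le\rho n$, and (T3) $|X|-\rho n\le\deg(xy,X)+\deg(x'y,X)$. *)

(* A 3-graph on a finite vertex type T is a set E of
   3-element subsets of T (the edges); n = #|T|. *)
From HB Require Import structures.
From mathcomp Require Import all_boot all_order all_algebra.
Set Implicit Arguments. Unset Strict Implicit. Unset Printing Implicit Defensive.
Import Order.TTheory GRing.Theory Num.Theory.

Section Defs.
Variable T : finType.
Variable E : {set {set T}}.

Definition is_3graph : Prop := forall e, e \in E -> #|e| = 3.

Definition nbh (u v : T) : {set T} := [set w | [set u; v; w] \in E].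

Definition degZ (u v : T) (Z : {set T}) : nat := #|nbh u v :&: Z|.

Definition edges_in (A : {set T}) : nat := #|[set e in E | e \subset A]|.

(* A spans a copy of K_4^- : |A| = 4 and A contains (at least) 3 edges,
   i.e. the 3-graph with 4 vertices and 3 edges is a subgraph of H[A]. *)
Definition spans_K4minus (A : {set T}) : bool :=
  (#|A| == 4) && (3 <= edges_in A).

Definition is_K43 (A : {set T}) : bool :=
  (#|A| == 4) && [forall t : {set T}, (t \subset A) && (#|t| == 3) ==> (t \in E)].

Definition connector1 (x y : T) (S : {set T}) : bool :=
  [&& [disjoint S & [set x; y]], #|S| == 3,
      spans_K4minus (x |: S) & spans_K4minus (y |: S)].

Definition spans_bridge1 (X Y : {set T}) (Z : {set T}) : bool :=
  [exists x0 in X, exists y0 in Y, exists S : {set T},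
     connector1 x0 y0 S && (Z == S :|: [set x0; y0])].
End Defs.

Section Typical.
Variable R : realFieldType.
Local Open Scope ring_scope.

Definition typical (T : finType) (E : {set {set T}}) (rho : R)
    (X Y : {set T}) (x x' y : T) : Prop :=
  let n := #|T|%:R in
  [/\ (#|Y|%:R - rho * n <= (degZ E x x' Y)%:R),
      (#|nbh E x y :&: X :&: (nbh E x' y :&: X)|%:R <= rho * n) &
      (#|X|%:R - rho * n <= (degZ E x y X + degZ E x' y X)%:R)].
End Typical.

(* Write A, A', B, B', C, D for the neighbourhoods of the pairs x y1, x' y1,
   x y2, x' y2, y1 y2 and x x'.  The three given edges make F = {x,x',y1,y2}
   span a K4^-.  Hence if a vertex v outside F lies in the neighbourhoods of two
   pairs of an edge triple S of F, then S is a connector between v and the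
   remaining vertex of F, and v |: F spans a bridge; if v lies in the
   neighbourhoods of all three pairs of S, then v |: S is a K4^3 crossing the
   bipartition.  So when there are few such bridges and K4^3's, most vertices
   lie in few of these neighbourhoods (e.g. at most one of A, A', D for v in X
   and at most two for v in Y).  Double counting over X and over Y and comparing with the minimum codegree
   (1/2 - gamma) n then pins |X| and |Y| near n/2 and shows that x x' y1 is
   typical. *)

From HB Require Import structures.
From mathcomp Require Import all_boot all_order all_algebra.
From mathcomp Require Import zify lra.
Import Order.TTheory GRing.Theory Num.Theory.

Set Implicit Arguments.
Unset Strict Implicit.

Ltac set_tauto := apply/setP => ?; rewrite !inE; do ![case: (_ == _)].

Ltac rewrite_neq :=
  repeat match goal with
  | H : is_true (?a != ?b) |- context [?a == ?b] => rewrite (negbTE H)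
  | H : is_true (?a != ?b) |- context [?b == ?a] => rewrite (eq_sym b a) (negbTE H)
  | H : is_true (?a \notin ?S) |- context [?a \in ?S] => rewrite (negbTE H)
  | H : is_true (?a \in ?S) |- context [?a \in ?S] => rewrite H
  end; rewrite ?eqxx /= ?orbF ?andbF ?orbT ?andbT.

Ltac case_eq_on z :=
  repeat match goal with |- context [z == ?w] => case: (eqVneq z w) => [->|?] end;
  rewrite_neq.

Ltac bool_cases :=
  repeat match goal with |- context [?a \in ?S] => case: (a \in S) end;
  vm_compute; intuition (try discriminate).

Section FinsetSums.
Variable U : finType.

Lemma card_setI_sum (S P : {set U}) : #|S :&: P| = \sum_(v in P) (v \in S).
Proof.
rewrite -sum1_card big_mkcond [RHS]big_mkcond /=; apply: eq_bigr => v _.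
by rewrite inE; case: (v \in S); case: (v \in P).
Qed.

Lemma sum_mem_le (S P : {set U}) : \sum_(v in P) (v \in S) <= #|S|.
Proof. by rewrite -card_setI_sum subset_leq_card ?subsetIl. Qed.

Lemma sum_eq1 (P : {set U}) a : a \in P -> \sum_(v in P) (v == a) = 1.
Proof. by move=> aP; rewrite (bigD1 a) //= eqxx big1 // => v /andP[_ /negbTE ->]. Qed.

End FinsetSums.

Section Hypergraph.
Variables (T : finType) (E : {set {set T}}).

Definition bridges_through (X Y F : {set T}) :=
  [set Z : {set T} | spans_bridge1 E X Y Z & F \subset Z].

Definition crossing_K43 (X Y F : {set T}) :=
  [set K : {set T} | [&& is_K43 E K, #|K :&: X| == 2, #|K :&: Y| == 2
                       & #|K :&: F| == 3]].

Lemma spans_bridge1_of_K4minus (X Y S : {set T}) u w :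
  u \in X -> w \in Y -> #|S| = 3 -> u \notin S -> w \notin S ->
  spans_K4minus E (u |: S) -> spans_K4minus E (w |: S) ->
  spans_bridge1 E X Y (S :|: [set u; w]).
Proof.
move=> uX wY S3 uS wS Ku Kw.
apply/existsP; exists u; rewrite uX; apply/existsP; exists w; rewrite wY.
apply/existsP; exists S; rewrite eqxx andbT /connector1 S3 Ku Kw !andbT.
by rewrite disjoint_sym disjoints_subset subUset !sub1set !inE uS wS.
Qed.

Hypothesis hE : is_3graph E.

Lemma edge_neq a b c : [set a; b; c] \in E -> [&& a != b, a != c & b != c].
Proof.
move=> /hE abc3; apply/and3P; split; apply/eqP => eq_ab; move: abc3; rewrite eq_ab.
- by rewrite (_ : [set b; b; c] = [set b; c]) ?cards2; [case: (_ == _)|set_tauto].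
- by rewrite (_ : [set c; b; c] = [set b; c]) ?cards2; [case: (_ == _)|set_tauto].
- by rewrite (_ : [set a; c; c] = [set a; c]) ?cards2; [case: (_ == _)|set_tauto].
Qed.

Lemma in_nbh_l u w : (u \in nbh E u w) = false.
Proof. by apply/negbTE; rewrite inE; apply/negP => /edge_neq; rewrite eqxx !andbF. Qed.

Lemma in_nbh_r u w : (w \in nbh E u w) = false.
Proof. by apply/negbTE; rewrite inE; apply/negP => /edge_neq; rewrite eqxx !andbF. Qed.

Lemma edges_in_ge3 (A e1 e2 e3 : {set T}) :
  e1 \in E -> e2 \in E -> e3 \in E ->
  e1 \subset A -> e2 \subset A -> e3 \subset A ->
  [&& e1 != e2, e1 != e3 & e2 != e3] -> 3 <= edges_in E A.
Proof.
move=> E1 E2 E3 S1 S2 S3 /and3P[n12 n13 n23].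
have -> : 3 = #|[set e1; e2; e3]|.
  by rewrite setUC cardsU1 cards2 n12 !inE ![e3 == _]eq_sym (negbTE n13) (negbTE n23).
rewrite /edges_in subset_leq_card //; apply/subsetP => e.
by rewrite !inE => /orP[/orP[]|] /eqP ->; rewrite ?E1 ?E2 ?E3.
Qed.

Lemma spans_K4minus_ext p q r s :
  [set p; q; r] \in E -> s \notin [set p; q; r] ->
  2 <= ([set p; q; s] \in E) + ([set p; r; s] \in E) + ([set q; r; s] \in E) ->
  spans_K4minus E (s |: [set p; q; r]).
Proof.
move=> Epqr sS two; have /and3P[pq pr qr] := edge_neq Epqr.
move: (sS); rewrite !inE !negb_or => /andP[/andP[sp sq] sr].
rewrite /spans_K4minus cardsU1 sS (hE Epqr) /=.
have Spqr : [set p; q; r] \subset s |: [set p; q; r].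
  by rewrite !subUset !sub1set !inE !eqxx !orbT.
have Spqs : [set p; q; s] \subset s |: [set p; q; r].
  by rewrite !subUset !sub1set !inE !eqxx !orbT.
have Sprs : [set p; r; s] \subset s |: [set p; q; r].
  by rewrite !subUset !sub1set !inE !eqxx !orbT.
have Sqrs : [set q; r; s] \subset s |: [set p; q; r].
  by rewrite !subUset !sub1set !inE !eqxx !orbT.
have neq (t1 t2 : {set T}) z : z \in t2 -> z \notin t1 -> t1 != t2.
  by move=> z2 z1; apply: contraNneq z1 => ->.
have n1 : [set p; q; r] != [set p; q; s] by apply: (neq _ _ s); rewrite !inE; rewrite_neq.
have n2 : [set p; q; r] != [set p; r; s] by apply: (neq _ _ s); rewrite !inE; rewrite_neq.
have n3 : [set p; q; r] != [set q; r; s] by apply: (neq _ _ s); rewrite !inE; rewrite_neq.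
have n4 : [set p; q; s] != [set p; r; s] by apply: (neq _ _ r); rewrite !inE; rewrite_neq.
have n5 : [set p; q; s] != [set q; r; s] by apply: (neq _ _ r); rewrite !inE; rewrite_neq.
have n6 : [set p; r; s] != [set q; r; s] by apply: (neq _ _ q); rewrite !inE; rewrite_neq.
move: two; case E1: ([set p; q; s] \in E); case E2: ([set p; r; s] \in E);
  case E3: ([set q; r; s] \in E) => //= _.
- by apply: (edges_in_ge3 Epqr E1 E2) => //; rewrite n1 n2 n4.
- by apply: (edges_in_ge3 Epqr E1 E2) => //; rewrite n1 n2 n4.
- by apply: (edges_in_ge3 Epqr E1 E3) => //; rewrite n1 n3 n5.
- by apply: (edges_in_ge3 Epqr E2 E3) => //; rewrite n2 n3 n6.
Qed.

Lemma is_K43_ext p q r s :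
  [set p; q; r] \in E -> s \notin [set p; q; r] ->
  [set p; q; s] \in E -> [set p; r; s] \in E -> [set q; r; s] \in E ->
  is_K43 E (s |: [set p; q; r]).
Proof.
move=> Epqr sS Epqs Eprs Eqrs; have /and3P[pq pr qr] := edge_neq Epqr.
move: (sS); rewrite !inE !negb_or => /andP[/andP[sp sq] sr].
set K := s |: _; have K4 : #|K| = 4 by rewrite cardsU1 sS (hE Epqr).
rewrite /is_K43 K4 eqxx /=; apply/forallP => t; apply/implyP => /andP[tK /eqP t3].
have /cards1P[w Kt] : #|K :\: t| == 1 by rewrite cardsDS // K4 t3.
have -> : t = K :\ w by rewrite -Kt setDDr setDv set0U; apply/esym/setIidPr.
have : w \in K by move: (set11 w); rewrite -Kt inE => /andP[].
rewrite !inE => /orP[/eqP->|/orP[/orP[]|] /eqP->]; first by rewrite setU1K.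
- by rewrite (_ : K :\ p = [set q; r; s]) //; apply/setP => z; rewrite !inE; case_eq_on z.
- by rewrite (_ : K :\ q = [set p; r; s]) //; apply/setP => z; rewrite !inE; case_eq_on z.
- by rewrite (_ : K :\ r = [set p; q; s]) //; apply/setP => z; rewrite !inE; case_eq_on z.
Qed.
End Hypergraph.

Section AroundF.
Variables (T : finType) (E : {set {set T}}) (X Y : {set T}) (x x' y1 y2 : T).
Hypotheses (hE : is_3graph E) (hXY : [disjoint X & Y]) (hXUY : X :|: Y = [set: T]).
Hypotheses (xX : x \in X) (x'X : x' \in X) (y1Y : y1 \in Y) (y2Y : y2 \in Y).
Hypotheses (Exy1y2 : [set x; y1; y2] \in E) (Exx'y1 : [set x; x'; y1] \in E)
  (Exx'y2 : [set x; x'; y2] \in E).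

Local Notation F := [set x; x'; y1; y2].
Local Notation A := (nbh E x y1).
Local Notation A' := (nbh E x' y1).
Local Notation B := (nbh E x y2).
Local Notation B' := (nbh E x' y2).
Local Notation C := (nbh E y1 y2).
Local Notation D := (nbh E x x').

Definition bridge_vertices :=
  [set v | (v \notin F) && spans_bridge1 E X Y (v |: F)].
Definition K43_vertices_Y :=
  [set v in Y | (v \notin F) && is_K43 E (v |: [set x; x'; y1])].
Definition K43_vertices_X :=
  [set v in X | (v \notin F) && is_K43 E (v |: [set x; y1; y2])].

Lemma neq_XY v w : v \in X -> w \in Y -> v != w.
Proof. by move=> vX; apply: contraTneq => <-; rewrite (disjointFr hXY vX). Qed.

Lemma notin_X v : v \in Y -> v \notin X.
Proof. by move=> vY; rewrite (disjointFl hXY vY). Qed.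

Lemma notin_Y v : v \in X -> v \notin Y.
Proof. by move=> vX; rewrite (disjointFr hXY vX). Qed.

Lemma x_neq_x' : x != x'.
Proof. by case/and3P: (edge_neq hE Exx'y1). Qed.

Lemma y1_neq_y2 : y1 != y2.
Proof. by case/and3P: (edge_neq hE Exy1y2). Qed.

Ltac F_facts :=
  have := x_neq_x'; have := y1_neq_y2;
  have := neq_XY xX y1Y; have := neq_XY xX y2Y;
  have := neq_XY x'X y1Y; have := neq_XY x'X y2Y;
  have := notin_X y1Y; have := notin_X y2Y; have := notin_Y xX; have := notin_Y x'X;
  move=> ? ? ? ? ? ? ? ? ? ?.

Lemma notin_F v : v \notin F -> [/\ v != x, v != x', v != y1 & v != y2].
Proof. by rewrite !inE !negb_or => /andP[/andP[/andP[-> ->] ->] ->]. Qed.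

Lemma notin_F_X v : v \in X -> v != x -> v != x' -> v \notin F.
Proof.
move=> vX vx vx'; have := neq_XY vX y1Y; have := neq_XY vX y2Y => ? ?.
by rewrite !inE; rewrite_neq.
Qed.

Lemma notin_F_Y v : v \in Y -> v != y1 -> v != y2 -> v \notin F.
Proof.
move=> vY vy1 vy2; have := neq_XY xX vY; have := neq_XY x'X vY => ? ?.
by rewrite !inE; rewrite_neq.
Qed.

Lemma setCX : ~: X = Y.
Proof.
apply/setP => v; rewrite inE; have := in_setT v; rewrite -hXUY inE.
by case: (boolP (v \in X)) => [/(disjointFr hXY)->|].
Qed.

Lemma card_split_XY (S : {set T}) : #|S| = #|S :&: X| + #|S :&: Y|.
Proof. by rewrite -(cardsID X S) setDE setCX. Qed.

Lemma card_XY : #|X| + #|Y| = #|T|.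
Proof. by rewrite -cardsT (card_split_XY [set: T]) !setTI. Qed.

Lemma bridge_vertex_xx'y1 v : v \in X -> v \notin F ->
  2 <= (v \in A) + (v \in A') + (v \in D) -> v \in bridge_vertices.
Proof.
move=> vX vF two; rewrite inE vF /=; case/notin_F: vF => ? ? ? ?; F_facts.
have -> : v |: F = [set x; x'; y1] :|: [set v; y2] by set_tauto.
apply: spans_bridge1_of_K4minus => //; first exact: hE.
- by rewrite !inE; rewrite_neq.
- by rewrite !inE; rewrite_neq.
- apply: spans_K4minus_ext => //; first by rewrite !inE; rewrite_neq.
  by move: two; rewrite !inE addnC addnA.
- apply: spans_K4minus_ext => //; first by rewrite !inE; rewrite_neq.
  by rewrite Exx'y2 Exy1y2; case: (_ \in _).
Qed.

Lemma bridge_vertex_xx'y2 v : v \in X -> v \notin F ->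
  2 <= (v \in D) + (v \in B) + (v \in B') -> v \in bridge_vertices.
Proof.
move=> vX vF two; rewrite inE vF /=; case/notin_F: vF => ? ? ? ?; F_facts.
have -> : v |: F = [set x; x'; y2] :|: [set v; y1] by set_tauto.
apply: spans_bridge1_of_K4minus => //; first exact: hE.
- by rewrite !inE; rewrite_neq.
- by rewrite !inE; rewrite_neq.
- apply: spans_K4minus_ext => //; first by rewrite !inE; rewrite_neq.
  by move: two; rewrite !inE.
- apply: spans_K4minus_ext => //; first by rewrite !inE; rewrite_neq.
  by rewrite Exx'y1 setUAC Exy1y2; case: (_ \in _).
Qed.

Lemma bridge_vertex_xy1y2 v : v \in Y -> v \notin F ->
  2 <= (v \in A) + (v \in B) + (v \in C) -> v \in bridge_vertices.
Proof.
move=> vY vF two; rewrite inE vF /=; case/notin_F: vF => ? ? ? ?; F_facts.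
have -> : v |: F = [set x; y1; y2] :|: [set x'; v] by set_tauto.
apply: spans_bridge1_of_K4minus => //; first exact: hE.
- by rewrite !inE; rewrite_neq.
- by rewrite !inE; rewrite_neq.
- apply: spans_K4minus_ext => //; first by rewrite !inE; rewrite_neq.
  by rewrite setUAC Exx'y1 setUAC Exx'y2; case: (_ \in _).
- apply: spans_K4minus_ext => //; first by rewrite !inE; rewrite_neq.
  by move: two; rewrite !inE.
Qed.

Lemma K43_vertex_xx'y1 v : v \in Y -> v \notin F ->
  v \in A -> v \in A' -> v \in D -> v \in K43_vertices_Y.
Proof.
move=> vY vF vA vA' vD; rewrite inE vY vF /=; case/notin_F: vF => ? ? ? ?.
move: vA vA' vD; rewrite !inE => vA vA' vD.
by apply: is_K43_ext => //; F_facts; rewrite !inE; rewrite_neq.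
Qed.

Lemma K43_vertex_xy1y2 v : v \in X -> v \notin F ->
  v \in A -> v \in B -> v \in C -> v \in K43_vertices_X.
Proof.
move=> vX vF vA vB vC; rewrite inE vX vF /=; case/notin_F: vF => ? ? ? ?.
move: vA vB vC; rewrite !inE => vA vB vC.
by apply: is_K43_ext => //; F_facts; rewrite !inE; rewrite_neq.
Qed.

Lemma card_bridge_vertices : #|bridge_vertices| <= #|bridges_through E X Y F|.
Proof.
rewrite -(@card_in_imset _ _ (fun v => v |: F)).
  apply/subset_leq_card/subsetP => Z /imsetP[v]; rewrite inE => /andP[_ Bv] ->.
  by rewrite inE Bv subsetUr.
move=> v w; rewrite !inE => /andP[vF _] /andP[wF _] /= vFwF.
by move: (setU11 v F); rewrite vFwF !inE (negbTE vF) orbF => /eqP.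
Qed.

Lemma card_K43_vertices_Y : #|K43_vertices_Y| <= #|crossing_K43 E X Y F|.
Proof.
rewrite -(@card_in_imset _ _ (fun v => v |: [set x; x'; y1])).
  apply/subset_leq_card/subsetP => Z /imsetP[v]; rewrite inE => /and3P[vY vF Kv] ->.
  rewrite inE Kv /=; case/notin_F: vF => ? ? ? ?; F_facts.
  have := notin_X vY => ?.
  rewrite (_ : _ :&: X = [set x; x']); last by apply/setP => z; rewrite !inE; case_eq_on z.
  rewrite (_ : _ :&: Y = [set v; y1]); last by apply/setP => z; rewrite !inE; case_eq_on z.
  rewrite (_ : _ :&: F = [set x; x'; y1]); last by apply/setP => z; rewrite !inE; case_eq_on z.
  by rewrite !cards2 (hE Exx'y1); rewrite_neq.
move=> v w vK _ /= vSwS; move: vK; rewrite inE => /and3P[_ /notin_F[? ? ? ?] _].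
by move: (setU11 v [set x; x'; y1]); rewrite vSwS !inE; rewrite_neq => /eqP.
Qed.

Lemma card_K43_vertices_X : #|K43_vertices_X| <= #|crossing_K43 E X Y F|.
Proof.
rewrite -(@card_in_imset _ _ (fun v => v |: [set x; y1; y2])).
  apply/subset_leq_card/subsetP => Z /imsetP[v]; rewrite inE => /and3P[vX vF Kv] ->.
  rewrite inE Kv /=; case/notin_F: vF => ? ? ? ?; F_facts; have := notin_Y vX => ?.
  rewrite (_ : _ :&: X = [set v; x]); last by apply/setP => z; rewrite !inE; case_eq_on z.
  rewrite (_ : _ :&: Y = [set y1; y2]); last by apply/setP => z; rewrite !inE; case_eq_on z.
  rewrite (_ : _ :&: F = [set x; y1; y2]); last by apply/setP => z; rewrite !inE; case_eq_on z.
  by rewrite !cards2 (hE Exy1y2); rewrite_neq.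
move=> v w vK _ /= vSwS; move: vK; rewrite inE => /and3P[_ /notin_F[? ? ? ?] _].
by move: (setU11 v [set x; y1; y2]); rewrite vSwS !inE; rewrite_neq => /eqP.
Qed.

Lemma local_xx'y1_X v : v \in X ->
  (v \in A) + (v \in A') + (v \in D) <= 1 + 2 * (v \in bridge_vertices).
Proof.
move=> vX; have [->|vx] := eqVneq v x; first by rewrite !(in_nbh_l hE); bool_cases.
have [->|vx'] := eqVneq v x'; first by rewrite (in_nbh_l hE) (in_nbh_r hE); bool_cases.
by have := bridge_vertex_xx'y1 vX (notin_F_X vX vx vx'); bool_cases.
Qed.

(* y2 may lie in all of A, A' and D but y1 lies at most in D: the indicator
   terms pass one unit of slack from y1 to y2. *)
Lemma local_xx'y1_Y v : v \in Y ->
  (v \in A) + (v \in A') + (v \in D) + (v == y1)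
    <= 2 + (v \in K43_vertices_Y) + (v == y2).
Proof.
move=> vY; have [->|vy1] := eqVneq v y1.
  by rewrite !(in_nbh_r hE) (negbTE y1_neq_y2); bool_cases.
have [->|vy2] := eqVneq v y2; first by bool_cases.
by have := @K43_vertex_xx'y1 v vY (notin_F_Y vY vy1 vy2); bool_cases.
Qed.

Lemma local_xy1y2_Y v : v \in Y ->
  (v \in A) + (v \in B) + (v \in C) <= 1 + 2 * (v \in bridge_vertices).
Proof.
move=> vY; have [->|vy1] := eqVneq v y1.
  by rewrite (in_nbh_r hE) (in_nbh_l hE); bool_cases.
have [->|vy2] := eqVneq v y2; first by rewrite !(in_nbh_r hE); bool_cases.
by have := bridge_vertex_xy1y2 vY (notin_F_Y vY vy1 vy2); bool_cases.
Qed.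

Lemma local_xy1y2_X v : v \in X ->
  (v \in A) + (v \in B) + (v \in C) + (v == x)
    <= 2 + (v \in K43_vertices_X) + (v == x').
Proof.
move=> vX; have [->|vx] := eqVneq v x.
  by rewrite !(in_nbh_l hE) (negbTE x_neq_x'); bool_cases.
have [->|vx'] := eqVneq v x'; first by bool_cases.
by have := @K43_vertex_xy1y2 v vX (notin_F_X vX vx vx'); bool_cases.
Qed.

Lemma local_xy1y2xx'_X v : v \in X ->
  (v \in A) + (v \in B) + (v \in C) + (v \in D) + (v == x)
    <= 2 + 2 * (v \in bridge_vertices) + (v \in K43_vertices_X) + (v == x').
Proof.
move=> vX; have [->|vx] := eqVneq v x.
  by rewrite !(in_nbh_l hE) (negbTE x_neq_x'); bool_cases.
have [->|vx'] := eqVneq v x'; first by rewrite (in_nbh_r hE); bool_cases.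
have vF := notin_F_X vX vx vx'.
have := bridge_vertex_xx'y1 vX vF; have := bridge_vertex_xx'y2 vX vF.
by have := @K43_vertex_xy1y2 v vX vF; bool_cases.
Qed.

Lemma codeg_xx'y1_X :
  #|A :&: X| + #|A' :&: X| + #|D :&: X| <= #|X| + 2 * #|bridge_vertices|.
Proof.
rewrite !card_setI_sum -!big_split /=.
apply: leq_trans (leq_sum _ (fun v => @local_xx'y1_X v)) _.
by rewrite big_split /= sum1_card -big_distrr leq_add2l leq_mul2l sum_mem_le orbT.
Qed.

Lemma codeg_xy1y2_Y :
  #|A :&: Y| + #|B :&: Y| + #|C :&: Y| <= #|Y| + 2 * #|bridge_vertices|.
Proof.
rewrite !card_setI_sum -!big_split /=.
apply: leq_trans (leq_sum _ (fun v => @local_xy1y2_Y v)) _.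
by rewrite big_split /= sum1_card -big_distrr leq_add2l leq_mul2l sum_mem_le orbT.
Qed.

Lemma codeg_xx'y1_Y :
  #|A :&: Y| + #|A' :&: Y| + #|D :&: Y| <= 2 * #|Y| + #|K43_vertices_Y|.
Proof.
have := leq_sum (index_enum T) (fun v => @local_xx'y1_Y v).
rewrite !big_split /= !sum_eq1 // leq_add2r -!card_setI_sum sum_nat_const mulnC.
by move/leq_trans; apply; rewrite leq_add2l subset_leq_card ?subsetIl.
Qed.

Lemma codeg_xy1y2_X :
  #|A :&: X| + #|B :&: X| + #|C :&: X| <= 2 * #|X| + #|K43_vertices_X|.
Proof.
have := leq_sum (index_enum T) (fun v => @local_xy1y2_X v).
rewrite !big_split /= !sum_eq1 // leq_add2r -!card_setI_sum sum_nat_const mulnC.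
by move/leq_trans; apply; rewrite leq_add2l subset_leq_card ?subsetIl.
Qed.

Lemma codeg_xy1y2xx'_X :
  #|A :&: X| + #|B :&: X| + #|C :&: X| + #|D :&: X|
    <= 2 * #|X| + 2 * #|bridge_vertices| + #|K43_vertices_X|.
Proof.
have := leq_sum (index_enum T) (fun v => @local_xy1y2xx'_X v).
rewrite !big_split /= !sum_eq1 // leq_add2r !sum_nat_const -!card_setI_sum.
have := subset_leq_card (subsetIl bridge_vertices X).
have := subset_leq_card (subsetIl K43_vertices_X X); lia.
Qed.

Local Notation b := #|bridges_through E X Y F|.
Local Notation k := #|crossing_K43 E X Y F|.

Lemma degree_sum_xx'y1_le : #|A| + #|A'| + #|D| <= #|X| + 2 * #|Y| + 2 * b + k.
Proof.
have := codeg_xx'y1_X; have := codeg_xx'y1_Y.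
have := card_bridge_vertices; have := card_K43_vertices_Y.
rewrite (card_split_XY A) (card_split_XY A') (card_split_XY D); lia.
Qed.

Lemma degree_sum_xy1y2_le : #|A| + #|B| + #|C| <= 2 * #|X| + #|Y| + 2 * b + k.
Proof.
have := codeg_xy1y2_X; have := codeg_xy1y2_Y.
have := card_bridge_vertices; have := card_K43_vertices_X.
rewrite (card_split_XY A) (card_split_XY B) (card_split_XY C); lia.
Qed.

Lemma degree_sum_xy1y2_xx'X_le :
  #|A| + #|B| + #|C| + #|D :&: X| <= 2 * #|X| + #|Y| + 4 * b + k.
Proof.
have := codeg_xy1y2xx'_X; have := codeg_xy1y2_Y.
have := card_bridge_vertices; have := card_K43_vertices_X.
rewrite (card_split_XY A) (card_split_XY B) (card_split_XY C); lia.
Qed.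

Lemma codeg_xx'y1_Y_le : #|A :&: Y| + #|A' :&: Y| + #|D :&: Y| <= 2 * #|Y| + k.
Proof. by apply: leq_trans codeg_xx'y1_Y _; rewrite leq_add2l card_K43_vertices_Y. Qed.

Lemma common_nbh_X_le : #|A :&: X :&: (A' :&: X)| <= b.
Proof.
apply: leq_trans card_bridge_vertices.
apply/subset_leq_card/subsetP => v; rewrite !in_setI -!andbA => /and4P[vA vX vA' _].
have [vx|vx] := eqVneq v x; first by rewrite vx (in_nbh_l hE) in vA.
have [vx'|vx'] := eqVneq v x'; first by rewrite vx' (in_nbh_l hE) in vA'.
by apply: (bridge_vertex_xx'y1 vX (notin_F_X vX vx vx')); rewrite vA vA'.
Qed.

Local Open Scope ring_scope.
Local Notation n := #|T|%:R.

Lemma balanced_typical (R : realFieldType) (gamma : R) :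
  (forall u v : T, u != v -> (2^-1 - gamma) * n <= #|nbh E u v|%:R) ->
  b%:R < gamma * n / 4%:R -> k%:R < gamma * n / 4%:R ->
  [/\ (2^-1 - 15%:R * gamma / 4%:R) * n <= #|X|%:R,
      #|X|%:R <= (2^-1 + 15%:R * gamma / 4%:R) * n,
      (2^-1 - 15%:R * gamma / 4%:R) * n <= #|Y|%:R,
      #|Y|%:R <= (2^-1 + 15%:R * gamma / 4%:R) * n &
      typical E (26%:R * gamma) X Y x x' y1].
Proof.
move=> hdeg few_bridges few_K43.
have degA := hdeg _ _ (neq_XY xX y1Y); have degA' := hdeg _ _ (neq_XY x'X y1Y).
have degB := hdeg _ _ (neq_XY xX y2Y); have degC := hdeg _ _ y1_neq_y2.
have degD := hdeg _ _ x_neq_x'.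
have splitR (S : {set T}) : #|S|%:R = #|S :&: X|%:R + #|S :&: Y|%:R :> R.
  by rewrite -natrD -card_split_XY.
have := splitR A; have := splitR A'; have := splitR D.
have := degree_sum_xx'y1_le; have := degree_sum_xy1y2_le.
have := degree_sum_xy1y2_xx'X_le; have := codeg_xx'y1_Y_le; have := common_nbh_X_le.
have := card_XY; move/(congr1 (fun m => m%:R : R)).
rewrite -!(ler_nat R) !natrD => ? ? ? ? ? ? ? ? ?.
have := ler0n R b; rewrite /typical /degZ /= natrD => ?.
by split; [lra | lra | lra | lra | split; lra].
Qed.
End AroundF.

Local Open Scope ring_scope.

Theorem lemma5p11 (R : realFieldType) (gamma : R) (T : finType)
    (E : {set {set T}}) (X Y : {set T}) (x x' y1 y2 : T) :
  0 < gamma ->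
  is_3graph E ->
  (forall u v : T, u != v -> (2^-1 - gamma) * #|T|%:R <= #|nbh E u v|%:R) ->
  [disjoint X & Y] -> X :|: Y = [set: T] ->
  x \in X -> x' \in X -> y1 \in Y -> y2 \in Y ->
  [set x; y1; y2] \in E -> [set x; x'; y1] \in E -> [set x; x'; y2] \in E ->
  let n := #|T|%:R in
  [\/ gamma * n / 4%:R <=
        #|[set Z : {set T} | spans_bridge1 E X Y Z
                            & [set x; x'; y1; y2] \subset Z]|%:R,
      gamma * n / 4%:R <=
        #|[set K : {set T} | [&& is_K43 E K, #|K :&: X| == 2%N,
                                 #|K :&: Y| == 2%N &
                                 #|K :&: [set x; x'; y1; y2]| == 3%N]]|%:R
    | [/\ (2^-1 - 15%:R * gamma / 4%:R) * n <= #|X|%:R,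
          #|X|%:R <= (2^-1 + 15%:R * gamma / 4%:R) * n,
          (2^-1 - 15%:R * gamma / 4%:R) * n <= #|Y|%:R,
          #|Y|%:R <= (2^-1 + 15%:R * gamma / 4%:R) * n &
          typical E (26%:R * gamma) X Y x x' y1]].
Proof.
move=> _ hE hdeg hXY hXUY xX x'X y1Y y2Y Exy1y2 Exx'y1 Exx'y2 n.
have [many_bridges|few_bridges] :=
  lerP (gamma * n / 4%:R) #|bridges_through E X Y [set x; x'; y1; y2]|%:R.
  exact: Or31.
have [many_K43|few_K43] :=
  lerP (gamma * n / 4%:R) #|crossing_K43 E X Y [set x; x'; y1; y2]|%:R.
  exact: Or32.
apply: Or33; exact: (balanced_typical hE hXY hXUY xX x'X y1Y y2Y Exy1y2 Exx'y1 Exx'y2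
  hdeg few_bridges few_K43).
Qed.
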